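(* Fix $\lambda\ge0$ and let $(p^t)_{t\ge0}$ be the iterates of the Blahut–Arimoto iteration. Then for every $t\ge0$ and every $p\in\Delta_n$, $$\chi(p)-\lambda s^Tp-f_\lambda(p^{t+1},p^t)\le\sum_xp_x\ln\frac{p^{t+1}_x}{p^t_x}.$$
   Context: Setup: integers $n\ge 1$, $m\ge1$; density matrices $\rho_1,\dots,\rho_n\in\mathcal{D}^m$ ($m\times m$ complex positive semidefinite, trace one); $\Delta_n$ the probability simplex in $\mathbb{R}^n$; $s\in\mathbb{R}^n$, $s\ge0$; $\lambda\ge0$. All logarithms are natural; matrix logarithms of positive semidefinite matrices are taken on their support, convention $0\ln0=0$. For $p\in\Delta_n$, $\rho_p=\sum_xp_x\rho_x$, $H(\rho)=-\operatorname{Tr}[\rho\ln\rho]$, $\chi(p)=H(\rho_p)-\sum_xp_xH(\rho_x)$. For $p,p'\in\Delta_n$, $$f_\lambda(p,p')=\sum_x p_x\ln\frac{p'_x}{p_x}+\sum_x p_x\operatorname{Tr}[\rho_x(\ln\rho_x-\ln\rho_{p'})]-\lambda s^Tp$$ (terms with $p_x=0$ are zero; value $-\infty$ if $p_x>0=p'_x$ for some $x$). Blahut–Arimoto iteration: $p^0_x=1/n$ for all $x$; given $p^t$ with positive entries, set $\rho^t=\rho_{p^t}$, $r^t_x=\exp\big(\ln p^t_x+\operatorname{Tr}[\rho_x\ln\rho_x]-\operatorname{Tr}[\rho_x\ln\rho^t]-\lambda s_x\big)$ and $p^{t+1}_x=r^t_x/\sum_yr^t_y$. *)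

(* Stdlib reals; complex numbers as pairs of reals;
   m x m complex matrices as functions nat -> nat -> C (indices < m). *)
From Stdlib Require Import Reals Classical ClassicalEpsilon.
Open Scope R_scope.

Record C := mkC { Re : R; Im : R }.
Definition C0 : C := mkC 0 0.
Definition C1 : C := mkC 1 0.
Definition RtoC (a : R) : C := mkC a 0.
Definition Cadd (z w : C) : C := mkC (Re z + Re w) (Im z + Im w).
Definition Cmul (z w : C) : C :=
  mkC (Re z * Re w - Im z * Im w) (Re z * Im w + Im z * Re w).
Definition Cconj (z : C) : C := mkC (Re z) (- Im z).

Fixpoint rsum (k : nat) (f : nat -> R) : R :=
  match k with O => 0 | S k' => rsum k' f + f k' end.
Fixpoint csum (k : nat) (f : nat -> C) : C :=
  match k with O => C0 | S k' => Cadd (csum k' f) (f k') end.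

Definition Mat := nat -> nat -> C.
Definition Vec := nat -> C.

Definition mtrace (m : nat) (A : Mat) : C := csum m (fun i => A i i).
Definition mmul (m : nat) (A B : Mat) : Mat :=
  fun i j => csum m (fun k => Cmul (A i k) (B k j)).
Definition inner (m : nat) (v w : Vec) : C :=
  csum m (fun i => Cmul (Cconj (v i)) (w i)).

Definition psd (m : nat) (A : Mat) : Prop :=
  forall v : Vec,
    let q := inner m v (fun i => csum m (fun j => Cmul (A i j) (v j))) in
    Im q = 0 /\ 0 <= Re q.

Definition density (m : nat) (rho : Mat) : Prop :=
  psd m rho /\ mtrace m rho = C1.

Definition spectral_decomp (m : nat) (A : Mat) (mu : nat -> R) (v : nat -> Vec)
  : Prop :=
  (forall k l, (k < m)%nat -> (l < m)%nat ->
     inner m (v k) (v l) = if Nat.eqb k l then C1 else C0) /\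
  (forall i j, (i < m)%nat -> (j < m)%nat ->
     A i j = csum m (fun k => Cmul (RtoC (mu k)) (Cmul (v k i) (Cconj (v k j))))).

(* matrix logarithm taken on the support: sum over eigenvalues mu_k > 0 of
   ln(mu_k) v_k v_k^*, using (any) spectral decomposition; the result does not
   depend on the chosen decomposition. Junk value 0 if none exists. *)
Definition mlog (m : nat) (A : Mat) : Mat :=
  match excluded_middle_informative
          (exists d : (nat -> R) * (nat -> Vec), spectral_decomp m A (fst d) (snd d))
  with
  | left H =>
      let d := proj1_sig (constructive_indefinite_description _ H) in
      fun i j => csum m (fun k =>
        if Rlt_dec 0 (fst d k)
        then Cmul (RtoC (ln (fst d k))) (Cmul (snd d k i) (Cconj (snd d k j)))
        else C0)
  | right _ => fun _ _ => C0
  end.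

(* Tr[A ln B] (real part; it is real for Hermitian A, B) *)
Definition trlog (m : nat) (A B : Mat) : R := Re (mtrace m (mmul m A (mlog m B))).

Definition entropy (m : nat) (rho : Mat) : R := - trlog m rho rho.

Definition simplex (n : nat) (p : nat -> R) : Prop :=
  (forall x, (x < n)%nat -> 0 <= p x) /\ rsum n p = 1.

Definition rho_of (n m : nat) (rhos : nat -> Mat) (p : nat -> R) : Mat :=
  fun i j => csum n (fun x => Cmul (RtoC (p x)) (rhos x i j)).

Definition chi (n m : nat) (rhos : nat -> Mat) (p : nat -> R) : R :=
  entropy m (rho_of n m rhos p) - rsum n (fun x => p x * entropy m (rhos x)).

(* f_lambda(p,p'); terms with p_x = 0 are zero.  The value -infinity (case
   p_x > 0 = p'_x) is not represented. *)
Definition f_lambda (n m : nat) (rhos : nat -> Mat) (s : nat -> R) (lam : R)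
  (p p' : nat -> R) : R :=
  rsum n (fun x => if Req_EM_T (p x) 0 then 0 else
            p x * ln (p' x / p x)
            + p x * (trlog m (rhos x) (rhos x) - trlog m (rhos x) (rho_of n m rhos p')))
  - lam * rsum n (fun x => s x * p x).

Fixpoint BA (n m : nat) (rhos : nat -> Mat) (s : nat -> R) (lam : R) (t : nat)
  : nat -> R :=
  match t with
  | O => fun _ => 1 / INR n
  | S t' =>
      let pt := BA n m rhos s lam t' in
      let r := fun x => exp (ln (pt x) + trlog m (rhos x) (rhos x)
                             - trlog m (rhos x) (rho_of n m rhos pt) - lam * s x) in
      fun x => r x / rsum n r
  end.

(* Write Z_t for the normalising sum of the Blahut-Arimoto update.  The update rule gives
   ln (p^{t+1}_x / p^t_x) = Tr[rho_x ln rho_x] - Tr[rho_x ln rho^t] - lambda s_x - ln Z_t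
   and f_lambda(p^{t+1}, p^t) = ln Z_t, so after averaging against p the claim reduces to
   Tr[rho_p ln rho^t] <= Tr[rho_p ln rho_p], which is Klein's inequality; its support
   condition holds because every p^t_x is positive.  Klein's inequality for psd A, B is
   proved in eigenbases (u_i) of A and (v_k) of B: the overlaps |<u_i, v_k>|^2 form a doubly
   stochastic matrix, which reduces it to the scalar inequality a - b <= a (ln a - ln b). *)

From Pilot Require Import Defs.
From Stdlib Require Import Reals ClassicalEpsilon Lra Lia.
From HB Require Import structures.
From mathcomp Require Import all_boot all_order all_algebra complex Rstruct ring.
Import Order.TTheory GRing.Theory Num.Theory Num.Def.

Local Open Scope ring_scope.

(** * Complex numbers *)

Definition to_cplx (z : Defs.C) : R[i] := Complex (Defs.Re z) (Defs.Im z).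
Definition of_cplx (z : R[i]) : Defs.C := Defs.mkC (complex.Re z) (complex.Im z).

Lemma of_cplxK : cancel of_cplx to_cplx. Proof. by case. Qed.
Lemma to_cplxK : cancel to_cplx of_cplx. Proof. by case. Qed.
Lemma to_cplx_inj : injective to_cplx. Proof. exact: can_inj to_cplxK. Qed.

Lemma to_cplxD z w : to_cplx (Cadd z w) = to_cplx z + to_cplx w.
Proof. by case: z; case: w. Qed.
Lemma to_cplxM z w : to_cplx (Cmul z w) = to_cplx z * to_cplx w.
Proof. by case: z; case: w. Qed.
Lemma to_cplxJ z : to_cplx (Cconj z) = (to_cplx z)^*.
Proof. by case: z. Qed.
Lemma Re_to_cplx z : Defs.Re z = complex.Re (to_cplx z). Proof. by []. Qed.
Lemma to_cplx_real a : to_cplx (RtoC a) = a%:C%C. Proof. by []. Qed.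
Lemma to_cplx_nat (b : bool) : to_cplx (if b then Defs.C1 else Defs.C0) = b%:R.
Proof. by case: b. Qed.

Lemma to_cplx_sum k f : to_cplx (csum k f) = \sum_(i < k) to_cplx (f i).
Proof. by elim: k => [|k IH]; rewrite ?big_ord0 // big_ord_recr /= to_cplxD IH. Qed.

Lemma rsumE k f : rsum k f = \sum_(i < k) f i.
Proof. by elim: k => [|k IH]; rewrite ?big_ord0 // big_ord_recr /= IH. Qed.

Lemma Re_sum (I : Type) (r : seq I) (F : I -> R[i]) :
  complex.Re (\sum_(i <- r) F i) = \sum_(i <- r) complex.Re (F i).
Proof.
elim: r => [|a r IH]; rewrite ?big_nil // !big_cons -IH.
by case: (F a); case: (\sum_(i <- r) F i).
Qed.

Lemma Re_realM (a : R) (z : R[i]) : complex.Re (a%:C * z)%C = a * complex.Re z.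
Proof. by case: z => x y /=; rewrite mul0r subr0. Qed.

Lemma Re_sum_realM (I : Type) (r : seq I) (a : I -> R) (F : I -> R[i]) :
  complex.Re (\sum_(i <- r) (a i)%:C%C * F i) = \sum_(i <- r) a i * complex.Re (F i).
Proof. by rewrite Re_sum; under eq_bigr do rewrite Re_realM. Qed.

Lemma real_complex_sum (I : Type) (r : seq I) (F : I -> R) :
  (\sum_(i <- r) F i)%:C%C = \sum_(i <- r) (F i)%:C%C.
Proof. by rewrite rmorph_sum. Qed.

Definition sqnormc (z : R[i]) : R := complex.Re z ^+ 2 + complex.Im z ^+ 2.

Lemma sqnormcE z : (sqnormc z)%:C%C = z^* * z.
Proof. by rewrite add_Re2_Im2 sqr_normc mulrC. Qed.
Lemma sqnormc_ge0 z : 0 <= sqnormc z.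
Proof. by rewrite addr_ge0 ?sqr_ge0. Qed.
Lemma sqnormcJ z : sqnormc z^* = sqnormc z.
Proof. by case: z => a b; rewrite /sqnormc /= sqrrN. Qed.
Lemma sqnormc_nat (b : bool) : sqnormc b%:R = b%:R.
Proof.
by apply: complexI; rewrite sqnormcE; case: b; rewrite ?rmorph1 ?rmorph0 ?mulr1 ?mulr0.
Qed.

(** * Quadratic forms and spectral decompositions *)

Definition qform m (A : Mat) (w1 w2 : nat -> R[i]) : R[i] :=
  \sum_(i < m) \sum_(j < m) (w1 i)^* * to_cplx (A i j) * w2 j.

Lemma to_cplx_inner m v w :
  to_cplx (inner m v w) = \sum_(i < m) (to_cplx (v i))^* * to_cplx (w i).
Proof. by rewrite to_cplx_sum; under eq_bigr do rewrite to_cplxM to_cplxJ. Qed.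

Lemma to_cplx_psd_form m A v :
  to_cplx (inner m v (fun i => csum m (fun j => Cmul (A i j) (v j)))) =
  qform m A (fun i => to_cplx (v i)) (fun i => to_cplx (v i)).
Proof.
rewrite to_cplx_inner; apply: eq_bigr => i _.
rewrite to_cplx_sum mulr_sumr; apply: eq_bigr => j _.
by rewrite to_cplxM mulrA.
Qed.

Lemma psd_qformP m A : psd m A <-> forall w, 0 <= qform m A w w.
Proof.
split=> [HA w | HA v /=]; last first.
  have := HA (fun i => to_cplx (v i)); rewrite -to_cplx_psd_form lecE /=.
  by case/andP => /eqP -> /RleP.
move: (HA (fun i => of_cplx (w i))) => /=.
set q := inner _ _ _ => -[Him Hre].
have <- : to_cplx q = qform m A w w.
  by rewrite /q to_cplx_psd_form /qform; under eq_bigr do under eq_bigr do rewrite !of_cplxK.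
by rewrite lecE /= Him eqxx; apply/RleP.
Qed.

Lemma qformDl m A x y z :
  qform m A (fun k => x k + y k) z = qform m A x z + qform m A y z.
Proof.
rewrite /qform -big_split; apply: eq_bigr => i _; rewrite -big_split.
by apply: eq_bigr => j _; rewrite rmorphD /= !mulrDl.
Qed.

Lemma qformDr m A x y z :
  qform m A x (fun k => y k + z k) = qform m A x y + qform m A x z.
Proof.
rewrite /qform -big_split; apply: eq_bigr => i _; rewrite -big_split.
by apply: eq_bigr => j _; rewrite !mulrDr.
Qed.

Definition basisv {m : nat} (a : 'I_m) (c : R[i]) : nat -> R[i] :=
  fun k => if k == a then c else 0.

Lemma qform_basisv m A (a b : 'I_m) c1 c2 :
  qform m A (basisv a c1) (basisv b c2) = c1^* * to_cplx (A a b) * c2.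
Proof.
rewrite /qform /basisv (bigD1 a) //= eqxx [X in _ + X]big1 ?addr0 => [|i Hia].
  rewrite (bigD1 b) //= eqxx big1 ?addr0 // => j Hjb.
  by rewrite val_eqE (negbTE Hjb) mulr0.
by rewrite val_eqE (negbTE Hia) big1 // => j _; rewrite rmorph0 !mul0r.
Qed.

Lemma psd_hermitian m A : psd m A ->
  forall a b : 'I_m, to_cplx (A b a) = (to_cplx (A a b))^*.
Proof.
move=> /psd_qformP HA a b.
have Hreal w : (qform m A w w)^* = qform m A w w by apply/conj_Creal/ger0_real.
pose Q c := qform m A (fun k => basisv a 1 k + basisv b c k)
                      (fun k => basisv a 1 k + basisv b c k).
have QE c : Q c = to_cplx (A a a) + to_cplx (A a b) * c
                  + c^* * to_cplx (A b a) + c^* * to_cplx (A b b) * c.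
  by rewrite /Q qformDl !qformDr !qform_basisv rmorph1 !mul1r !mulr1 !addrA.
have Haa := Hreal (basisv a 1); have Hbb := Hreal (basisv b 1).
rewrite !qform_basisv !rmorph1 !mul1r !mulr1 in Haa Hbb.
have H1 := Hreal (fun k => basisv a 1 k + basisv b 1 k).
have H2 := Hreal (fun k => basisv a 1 k + basisv b 'i k).
rewrite -/(Q 1) QE rmorph1 !mulr1 !mul1r !rmorphD /= Haa Hbb in H1.
rewrite -/(Q 'i) QE !rmorphD !rmorphM /= conjCi Haa Hbb rmorphN /= conjCi opprK in H2.
set x := to_cplx (A a b) in H1 H2 *; set y := to_cplx (A b a) in H1 H2 *.
set aa := to_cplx (A a a) in H1 H2; set bb := to_cplx (A b b) in H1 H2.
(* [H1]: [x + y] is real, [H2]: [x - y] is imaginary; [key] combines them into [y = x^*]. *)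
have Hii : 'i * 'i = -1 :> R[i] by rewrite -expr2 sqrCi.
have key : 2 * (y^* - x) =
  ((aa + x^* + y^* + bb) - (aa + x + y + bb))
  - ((aa + x^* * - 'i + 'i * y^* + 'i * bb * - 'i)
     - (aa + x * 'i + - 'i * y + - 'i * bb * 'i)) * 'i
  - (x^* - y^* + x - y) * ('i * 'i + 1) :> R[i] by ring.
rewrite H1 H2 Hii !subrr addNr mulr0 mul0r subrr in key.
move/eqP: key; rewrite subrr mulf_eq0 pnatr_eq0 /= subr_eq0 => /eqP <-.
by rewrite conjCK.
Qed.

Lemma psd_spectral_decomp m A : psd m A -> exists mu v, spectral_decomp m A mu v.
Proof.
case: m => [|m] HA.
  by exists (fun _ => 0%R), (fun _ _ => Defs.C0); split=> ? ? /ssrnat.ltP.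
pose M : 'M[R[i]]_m.+1 := \matrix_(i, j) to_cplx (A i j).
have HM : M \is hermsymmx.
  apply/is_hermitianmxP; rewrite expr0 scale1r; apply/matrixP => i j.
  by rewrite !mxE (psd_hermitian _ _ HA).
have /orthomx_spectralP := hermitian_normalmx HM.
have Hreal := hermitian_spectral_diag_real HM.
set P := spectralmx M; set d := spectral_diag M.
have HP : P \is unitarymx by apply: spectral_unitarymx.
rewrite invmx_unitary // => EM.
exists (fun k => complex.Re (d 0 (inord k))).
exists (fun k i => of_cplx ((P (inord k) (inord i))^*)).
split=> [k l /ssrnat.ltP Hk /ssrnat.ltP Hl | i j /ssrnat.ltP Hi /ssrnat.ltP Hj];
  apply: to_cplx_inj.
- have /unitarymxP/(congr1 (fun X : 'M[R[i]]_m.+1 => X (inord k) (inord l))) := HP.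
  rewrite !mxE /= => Ekl.
  have -> : Nat.eqb k l = (inord k == inord l :> 'I_m.+1).
    apply/PeanoNat.Nat.eqb_spec/eqP => [-> // | Ekl'].
    by rewrite -(@inordK m k) // -(@inordK m l) // Ekl'.
  rewrite to_cplx_nat -Ekl to_cplx_inner; apply: eq_bigr => i _.
  by rewrite !of_cplxK !inord_val conjCK !mxE.
- have := congr1 (fun X : 'M[R[i]]_m.+1 => X (inord i) (inord j)) EM.
  rewrite !mxE !inordK // => ->; rewrite to_cplx_sum mul_mx_diag.
  apply: eq_bigr => k _.
  rewrite !mxE !to_cplxM to_cplx_real to_cplxJ !of_cplxK conjCK !inord_val.
  have /mxOverP/(_ 0 k) Hk := Hreal.
  by rewrite RRe_real //; ring.
Qed.

Definition dotc m (u w : nat -> R[i]) : R[i] := \sum_(i < m) (u i)^* * w i.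

Lemma dotcJ m u w : (dotc m u w)^* = dotc m w u.
Proof.
rewrite /dotc rmorph_sum; apply: eq_bigr => i _.
by rewrite rmorphM /= conjCK mulrC.
Qed.

Lemma Re_dotcc m w : complex.Re (dotc m w w) = \sum_(j < m) sqnormc (w j).
Proof. by rewrite /dotc Re_sum; apply: eq_bigr => j _; rewrite -sqnormcE. Qed.

Definition eigv (v : nat -> Vec) (k : nat) : nat -> R[i] := fun i => to_cplx (v k i).

Section SpectralDecomposition.

Context {m : nat} {B : Mat} {mu : nat -> R} {v : nat -> Vec}.
Hypothesis Hd : spectral_decomp m B mu v.

Lemma spectral_entry (i j : 'I_m) :
  to_cplx (B i j) = \sum_(k < m) (mu k)%:C%C * (eigv v k i * (eigv v k j)^*).
Proof.
have [_ ->] := Hd; try exact/ssrnat.ltP.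
by rewrite to_cplx_sum; under eq_bigr do rewrite !to_cplxM to_cplx_real to_cplxJ.
Qed.

Lemma dotc_eigv (k l : 'I_m) : dotc m (eigv v k) (eigv v l) = (k == l)%:R.
Proof.
have [+ _] := Hd => /(_ k l (ssrnat.ltP (ltn_ord k)) (ssrnat.ltP (ltn_ord l))).
move/(congr1 to_cplx); rewrite to_cplx_inner to_cplx_nat => Ekl.
by rewrite /dotc Ekl; congr _%:R; apply/PeanoNat.Nat.eqb_spec/eqP => [/val_inj|->].
Qed.

Lemma eigv_complete (i j : 'I_m) :
  \sum_(k < m) eigv v k i * (eigv v k j)^* = (i == j)%:R.
Proof.
pose W : 'M[R[i]]_m := \matrix_(k, i) (eigv v k i)^*.
have HW : W \is unitarymx.
  apply/unitarymxP/matrixP => k l; rewrite !mxE -dotc_eigv.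
  by apply: eq_bigr => x _; rewrite !mxE conjCK mulrC.
have : (W ^t* *m W)%sesqui = 1%:M by rewrite -invmx_unitary // mulVmx ?unitarymx_unit.
move/matrixP/(_ i j); rewrite !mxE => <-.
by apply: eq_bigr => k _; rewrite !mxE conjCK.
Qed.

Lemma qform_spectral w1 w2 : qform m B w1 w2 =
  \sum_(k < m) (mu k)%:C%C * ((dotc m (eigv v k) w1)^* * dotc m (eigv v k) w2).
Proof.
rewrite /qform.
under eq_bigr do under eq_bigr do rewrite spectral_entry mulr_sumr mulr_suml.
under eq_bigr do rewrite exchange_big.
rewrite exchange_big; apply: eq_bigr => k _.
rewrite dotcJ /dotc mulr_suml mulr_sumr; apply: eq_bigr => i _.
rewrite !mulr_sumr; apply: eq_bigr => j _.
ring.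
Qed.

Lemma parseval w :
  \sum_(k < m) sqnormc (dotc m (eigv v k) w) = \sum_(i < m) sqnormc (w i).
Proof.
apply: complexI; rewrite !real_complex_sum.
under eq_bigr do rewrite sqnormcE dotcJ /dotc mulr_suml.
under [RHS]eq_bigr do rewrite sqnormcE.
under eq_bigr do under eq_bigr do rewrite mulr_sumr.
rewrite exchange_big; apply: eq_bigr => i _ /=.
rewrite exchange_big (bigD1 i) //= [X in _ + X]big1 ?addr0 => [|j Hji].
  rewrite (eq_bigr (fun k : 'I_m => (w i)^* * w i * (eigv v k i * (eigv v k i)^*))) => [|k _].
    by rewrite -mulr_sumr eigv_complete eqxx mulr1.
  by ring.
rewrite (eq_bigr (fun k : 'I_m => (w i)^* * w j * (eigv v k i * (eigv v k j)^*))) => [|k _].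
  by rewrite -mulr_sumr eigv_complete eq_sym (negbTE Hji) mulr0.
by ring.
Qed.

Lemma Re_qform_spectral w :
  complex.Re (qform m B w w) = \sum_(k < m) mu k * sqnormc (dotc m (eigv v k) w).
Proof.
by rewrite qform_spectral Re_sum_realM; under eq_bigr do rewrite -sqnormcE.
Qed.

Lemma Re_qform_eigv (l : 'I_m) : complex.Re (qform m B (eigv v l) (eigv v l)) = mu l.
Proof.
rewrite Re_qform_spectral; under eq_bigr do rewrite dotc_eigv sqnormc_nat.
rewrite (bigD1 l) //= eqxx mulr1 big1 ?addr0 // => k /negbTE ->.
by rewrite mulr0.
Qed.

Lemma Re_trace_spectral : complex.Re (to_cplx (mtrace m B)) = \sum_(k < m) mu k.
Proof.
rewrite /mtrace to_cplx_sum; under eq_bigr do rewrite spectral_entry.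
rewrite exchange_big Re_sum; apply: eq_bigr => k _.
rewrite -mulr_sumr Re_realM (eq_bigr (fun i : 'I_m => (eigv v k i)^* * eigv v k i)).
  by rewrite -[X in complex.Re X]/(dotc m _ _) dotc_eigv eqxx mulr1.
by move=> i _; rewrite mulrC.
Qed.

End SpectralDecomposition.

Definition ln_supp (x : R) : R := if Rlt_dec 0 x then ln x else 0.

Lemma trlog_spectral {m B} : psd m B ->
  exists mu v, spectral_decomp m B mu v /\ forall X,
    trlog m X B = \sum_(k < m) ln_supp (mu k) * complex.Re (qform m X (eigv v k) (eigv v k)).
Proof.
move=> /psd_spectral_decomp HB; rewrite /trlog /mlog.
case: excluded_middle_informative => [H|[]]; last first.
  by case: HB => mu [v Hd]; exists (mu, v).
set d := proj1_sig _.
have Hd : spectral_decomp m B d.1 d.2.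
  exact: proj2_sig (constructive_indefinite_description _ H).
exists d.1, d.2; split=> // X.
pose c k := (ln_supp (d.1 k))%:C%C.
rewrite -Re_sum_realM -/c Re_to_cplx /mtrace to_cplx_sum.
rewrite (eq_bigr (fun i : 'I_m => \sum_(j < m) to_cplx (X i j) *
   \sum_(k < m) c k * (eigv d.2 k j * (eigv d.2 k i)^*))) => [|i _]; last first.
  rewrite /mmul to_cplx_sum; apply: eq_bigr => j _.
  rewrite to_cplxM to_cplx_sum; congr (_ * _); apply: eq_bigr => k _.
  rewrite /c /ln_supp; case: (Rlt_dec 0 (d.1 k)) => ?; last by rewrite mul0r.
  by rewrite !to_cplxM to_cplx_real to_cplxJ.
congr complex.Re; rewrite /qform.
under eq_bigr do under eq_bigr do rewrite mulr_sumr.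
under eq_bigr do rewrite exchange_big.
rewrite exchange_big; apply: eq_bigr => k _.
rewrite mulr_sumr; apply: eq_bigr => i _.
rewrite mulr_sumr; apply: eq_bigr => j _.
by rewrite /eigv; ring.
Qed.

(** * Klein's inequality *)

Lemma Re_qform_ge0 m A w : psd m A -> 0 <= complex.Re (qform m A w w).
Proof. by move=> /psd_qformP/(_ w); rewrite lecE => /andP[]. Qed.

Local Open Scope R_scope.

Lemma sub_le_mul_ln_ratio a b : 0 < a -> 0 < b -> a - b <= a * (ln a - ln b).
Proof.
move=> Ha Hb; have := exp_ineq1_le (ln b - ln a).
rewrite exp_plus exp_Ropp !exp_ln // => H.
have E : a * (b * / a) = b by rewrite -Rmult_assoc Rinv_r_simpl_m //; lra.
have := Rmult_le_compat_l a _ _ (Rlt_le _ _ Ha) H; lra.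
Qed.

Lemma klein_term a b P : 0 <= a -> 0 <= b -> 0 <= P -> (0 < a -> b = 0 -> P = 0) ->
  P * (a - b) <= P * a * (ln_supp a - ln_supp b).
Proof.
move=> Ha Hb HP Hsupp; rewrite /ln_supp.
case: (Rlt_dec 0 a) => Ha' /=.
  case: (Rlt_dec 0 b) => Hb' /=; last by rewrite (Hsupp Ha'); lra.
  have := Rmult_le_compat_l P _ _ HP (sub_le_mul_ln_ratio _ _ Ha' Hb'); lra.
have -> : a = 0 by lra.
nra.
Qed.

Local Close Scope R_scope.

Lemma klein_doubly_stochastic m (a b : nat -> R) (P : nat -> nat -> R) :
  (forall i : 'I_m, 0 <= a i) -> (forall k : 'I_m, 0 <= b k) ->
  (forall i k : 'I_m, 0 <= P i k) ->
  (forall i : 'I_m, \sum_(k < m) P i k = 1) -> (forall k : 'I_m, \sum_(i < m) P i k = 1) ->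
  (forall k : 'I_m, b k = 0 -> \sum_(i < m) a i * P i k = 0) ->
  \sum_(k < m) ln_supp (b k) * \sum_(i < m) a i * P i k
    + (\sum_(i < m) a i - \sum_(k < m) b k) <= \sum_(i < m) ln_supp (a i) * a i.
Proof.
move=> Ha Hb HP Hrow Hcol Hsupp.
have <- : \sum_(i < m) \sum_(k < m) P i k * (a i - b k) = \sum_(i < m) a i - \sum_(k < m) b k.
  under eq_bigr do under eq_bigr do rewrite mulrBr.
  under eq_bigr do rewrite sumrB -mulr_suml Hrow mul1r.
  rewrite sumrB exchange_big /=; congr (_ - _); apply: eq_bigr => k _.
  by rewrite -mulr_suml Hcol mul1r.
rewrite -lerBrDl; under [X in _ <= _ - X]eq_bigr do rewrite mulr_sumr.
rewrite [X in _ <= _ - X]exchange_big -sumrB /=; apply: ler_sum => i _.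
rewrite -[ln_supp (a i) * a i]mul1r -(Hrow i) mulr_suml -sumrB; apply: ler_sum => k _.
have -> : P i k * (ln_supp (a i) * a i) - ln_supp (b k) * (a i * P i k)
  = P i k * a i * (ln_supp (a i) - ln_supp (b k)) by ring.
apply/RleP/klein_term; [exact/RleP/Ha | exact/RleP/Hb | exact/RleP/HP |].
move=> /RltP Hai Hbk.
have /eqP := @psumr_eq0P _ _ _ _ (fun j _ => mulr_ge0 (Ha j) (HP j k)) (Hsupp k Hbk) i isT.
by rewrite mulf_eq0 (gt_eqF Hai) => /eqP.
Qed.

Lemma klein_inequality {m A B} : psd m A -> psd m B ->
  (forall w, complex.Re (qform m B w w) = 0 -> complex.Re (qform m A w w) = 0) ->
  trlog m A B + (Defs.Re (mtrace m A) - Defs.Re (mtrace m B)) <= trlog m A A.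
Proof.
move=> HA HB Hsupp.
have [a [u [Hu trlogA]]] := trlog_spectral HA.
have [b [v [Hv trlogB]]] := trlog_spectral HB.
rewrite trlogA trlogB !Re_to_cplx.
rewrite (Re_trace_spectral Hu) (Re_trace_spectral Hv).
under eq_bigr do rewrite (Re_qform_spectral Hu).
under [X in _ <= X]eq_bigr do rewrite (Re_qform_eigv Hu).
apply: (@klein_doubly_stochastic m a b (fun i k => sqnormc (dotc m (eigv u i) (eigv v k)))).
- by move=> i; rewrite -(Re_qform_eigv Hu); apply: Re_qform_ge0.
- by move=> k; rewrite -(Re_qform_eigv Hv); apply: Re_qform_ge0.
- by move=> i k; apply: sqnormc_ge0.
- move=> i; under eq_bigr do rewrite -sqnormcJ dotcJ.
  by rewrite (parseval Hv) -Re_dotcc (dotc_eigv Hu) eqxx.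
- by move=> k; rewrite (parseval Hu) -Re_dotcc (dotc_eigv Hv) eqxx.
- move=> k Hk; rewrite -(Re_qform_spectral Hu); apply: Hsupp.
  by rewrite (Re_qform_eigv Hv).
Qed.

Section Mixtures.

Context {n m : nat} {rhos : nat -> Mat}.

Lemma qform_rho_of p w1 w2 :
  qform m (rho_of n m rhos p) w1 w2 = \sum_(x < n) (p x)%:C%C * qform m (rhos x) w1 w2.
Proof.
rewrite /qform.
under eq_bigr do under eq_bigr do rewrite to_cplx_sum mulr_sumr mulr_suml.
under eq_bigr do rewrite exchange_big.
rewrite exchange_big; apply: eq_bigr => x _.
rewrite mulr_sumr; apply: eq_bigr => i _.
rewrite mulr_sumr; apply: eq_bigr => j _.
by rewrite to_cplxM to_cplx_real; ring.
Qed.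

Lemma Re_trace_rho_of p :
  Defs.Re (mtrace m (rho_of n m rhos p)) = \sum_(x < n) p x * Defs.Re (mtrace m (rhos x)).
Proof.
rewrite Re_to_cplx; under [RHS]eq_bigr do rewrite Re_to_cplx.
rewrite -Re_sum_realM /mtrace !to_cplx_sum; congr complex.Re.
under eq_bigr do rewrite to_cplx_sum.
rewrite exchange_big; apply: eq_bigr => x _.
by rewrite to_cplx_sum mulr_sumr; under eq_bigr do rewrite to_cplxM to_cplx_real.
Qed.

Lemma trlog_rho_of p B :
  trlog m (rho_of n m rhos p) B = rsum n (fun x => p x * trlog m (rhos x) B).
Proof.
rewrite rsumE /trlog Re_to_cplx; under [RHS]eq_bigr do rewrite Re_to_cplx.
rewrite -Re_sum_realM /mtrace !to_cplx_sum; congr complex.Re.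
under eq_bigr do rewrite /mmul to_cplx_sum.
under eq_bigr do under eq_bigr do rewrite to_cplxM to_cplx_sum mulr_suml.
under eq_bigr do rewrite exchange_big.
rewrite exchange_big; apply: eq_bigr => x _.
rewrite to_cplx_sum mulr_sumr; apply: eq_bigr => i _.
rewrite to_cplx_sum mulr_sumr; apply: eq_bigr => k _.
by rewrite !to_cplxM to_cplx_real mulrA.
Qed.

Hypothesis psd_rhos : forall x : 'I_n, psd m (rhos x).

Lemma psd_rho_of (p : nat -> R) : (forall x : 'I_n, 0 <= p x) -> psd m (rho_of n m rhos p).
Proof.
move=> Hp; apply/psd_qformP => w; rewrite qform_rho_of.
apply: sumr_ge0 => x _; rewrite mulr_ge0 ?ler0c //.
exact: (proj1 (psd_qformP _ _) (psd_rhos x)).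
Qed.

Lemma rho_of_kernel (p q : nat -> R) w : (forall x : 'I_n, 0 < q x) ->
  complex.Re (qform m (rho_of n m rhos q) w w) = 0 ->
  complex.Re (qform m (rho_of n m rhos p) w w) = 0.
Proof.
move=> Hq; rewrite !qform_rho_of !Re_sum_realM => Hq0.
have Hterm (x : 'I_n) : complex.Re (qform m (rhos x) w w) = 0.
  have terms_ge0 (y : 'I_n) : true -> 0 <= q y * complex.Re (qform m (rhos y) w w).
    move=> _; exact: mulr_ge0 (ltW (Hq y)) (Re_qform_ge0 _ _ w (psd_rhos y)).
  have := @psumr_eq0P _ _ _ _ terms_ge0 Hq0 x isT.
  by move/eqP; rewrite mulf_eq0 (gt_eqF (Hq x)) => /eqP.
by rewrite big1 // => x _; rewrite Hterm mulr0.
Qed.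

End Mixtures.

Lemma trlog_rho_of_le n m (rhos : nat -> Mat) (p q : nat -> R) :
  (forall x : 'I_n, density m (rhos x)) ->
  (forall x : 'I_n, 0 <= p x) -> \sum_(x < n) p x = 1 ->
  (forall x : 'I_n, 0 < q x) -> \sum_(x < n) q x = 1 ->
  trlog m (rho_of n m rhos p) (rho_of n m rhos q)
    <= trlog m (rho_of n m rhos p) (rho_of n m rhos p).
Proof.
move=> Hd Hp Sp Hq Sq.
have psd_rhos (x : 'I_n) : psd m (rhos x) by case: (Hd x).
have trace1 (r : nat -> R) :
    \sum_(x < n) r x = 1 -> Defs.Re (mtrace m (rho_of n m rhos r)) = 1.
  move=> Sr; rewrite Re_trace_rho_of -[RHS]Sr; apply: eq_bigr => x _.
  by rewrite (proj2 (Hd x)) /= mulr1.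
have := klein_inequality (psd_rho_of psd_rhos p Hp)
  (psd_rho_of psd_rhos q (fun x => ltW (Hq x))) (fun w => rho_of_kernel psd_rhos p q w Hq).
by rewrite !trace1 // subrr addr0.
Qed.

(** * Blahut-Arimoto iterates *)

Local Close Scope ring_scope.
Local Open Scope R_scope.

Lemma ln_div a b : 0 < a -> 0 < b -> ln (a / b) = ln a - ln b.
Proof. by move=> Ha Hb; rewrite ln_mult ?ln_Rinv //; apply: Rinv_0_lt_compat. Qed.

Lemma ln_inv_ratio a b : 0 < a -> 0 < b -> ln (b / a) = - ln (a / b).
Proof. by move=> Ha Hb; rewrite !ln_div //; lra. Qed.

Lemma rsum_ext k f g : (forall x, (x < k)%coq_nat -> f x = g x) -> rsum k f = rsum k g.
Proof. by move=> Hfg; rewrite !rsumE; apply: eq_bigr => x _; apply/Hfg/ssrnat.ltP. Qed.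

Lemma rsumD k f g : rsum k (fun x => f x + g x) = rsum k f + rsum k g.
Proof. by rewrite !rsumE big_split. Qed.

Lemma rsumB k f g : rsum k (fun x => f x - g x) = rsum k f - rsum k g.
Proof. by rewrite !rsumE sumrB. Qed.

Lemma rsumZ k c f : rsum k (fun x => c * f x) = c * rsum k f.
Proof. by rewrite !rsumE -mulr_sumr. Qed.

Lemma rsum_const k c : rsum k (fun _ => c) = INR k * c.
Proof.
elim: k => [|k IH]; first by rewrite /=; lra.
by rewrite S_INR [rsum _ _]/= IH; lra.
Qed.

Lemma rsum_gt0 k f : (0 < k)%coq_nat -> (forall x, (x < k)%coq_nat -> 0 < f x) -> 0 < rsum k f.
Proof.
move=> Hk Hf; rewrite rsumE; apply/RltP.
case: k Hk Hf => [|k] Hk Hf; first lia.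
rewrite big_ord_recl; apply: ltr_pwDl; first exact/RltP/Hf/ssrnat.ltP.
by apply: sumr_ge0 => x _; apply/RleP/Rlt_le/Hf/ssrnat.ltP/ltn_ord.
Qed.

Section BlahutArimoto.

Context {n m : nat} {rhos : nat -> Mat} {s : nat -> R} {lam : R}.
Hypothesis n_gt0 : (1 <= n)%coq_nat.

Definition BA_weight (q : nat -> R) (x : nat) : R :=
  exp (ln (q x) + trlog m (rhos x) (rhos x)
       - trlog m (rhos x) (rho_of n m rhos q) - lam * s x).

Lemma BA_succ t :
  BA n m rhos s lam (S t) =
  fun x => BA_weight (BA n m rhos s lam t) x / rsum n (BA_weight (BA n m rhos s lam t)).
Proof. by []. Qed.

Lemma BA_weight_sum_gt0 q : 0 < rsum n (BA_weight q).
Proof. by apply: rsum_gt0 => [|x _]; [lia | exact: exp_pos]. Qed.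

Lemma BA_gt0 t x : (x < n)%coq_nat -> 0 < BA n m rhos s lam t x.
Proof.
move=> _; case: t => [|t] /=.
  by apply: Rdiv_lt_0_compat; [lra | apply: lt_0_INR; lia].
exact: Rdiv_lt_0_compat (exp_pos _) (BA_weight_sum_gt0 _).
Qed.

Lemma BA_sum1 t : rsum n (BA n m rhos s lam t) = 1.
Proof.
case: t => [|t].
  by rewrite /= rsum_const /Rdiv Rmult_1_l Rinv_r //; apply: not_0_INR; lia.
set q := BA n m rhos s lam t.
rewrite BA_succ (@rsum_ext _ _ (fun x => / rsum n (BA_weight q) * BA_weight q x)) => [|x _].
  by rewrite rsumZ Rinv_l //; have := BA_weight_sum_gt0 q; lra.
by rewrite /Rdiv Rmult_comm.
Qed.

Lemma ln_BA_ratio t x : (x < n)%coq_nat ->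
  ln (BA n m rhos s lam (S t) x / BA n m rhos s lam t x) =
  trlog m (rhos x) (rhos x) - trlog m (rhos x) (rho_of n m rhos (BA n m rhos s lam t))
  - lam * s x - ln (rsum n (BA_weight (BA n m rhos s lam t))).
Proof.
move=> Hx; have Hq := BA_gt0 t x Hx; have Hq' := BA_gt0 (S t) x Hx.
have HZ := BA_weight_sum_gt0 (BA n m rhos s lam t).
rewrite ln_div // BA_succ /= ln_div //; last exact: exp_pos.
by rewrite /BA_weight ln_exp; lra.
Qed.

Lemma f_lambda_BA t :
  f_lambda n m rhos s lam (BA n m rhos s lam (S t)) (BA n m rhos s lam t) =
  ln (rsum n (BA_weight (BA n m rhos s lam t))).
Proof.
set q := BA n m rhos s lam t; set q' := BA n m rhos s lam (S t).
set Z := rsum n (BA_weight q).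
rewrite /f_lambda (@rsum_ext n _ (fun x => lam * (s x * q' x) + ln Z * q' x)).
  by rewrite rsumD !rsumZ /q' BA_sum1; lra.
move=> x Hx; have Hq : 0 < q x := BA_gt0 t x Hx.
have Hq' : 0 < q' x := BA_gt0 (S t) x Hx.
case: Req_dec_T => [E | _]; first lra.
by rewrite ln_inv_ratio // ln_BA_ratio // -/q -/Z; lra.
Qed.

Lemma sum_ln_BA_ratio t (p : nat -> R) : rsum n p = 1 ->
  rsum n (fun x => p x * ln (BA n m rhos s lam (S t) x / BA n m rhos s lam t x)) =
  rsum n (fun x => p x * trlog m (rhos x) (rhos x))
  - rsum n (fun x => p x * trlog m (rhos x) (rho_of n m rhos (BA n m rhos s lam t)))
  - lam * rsum n (fun x => s x * p x)
  - ln (rsum n (BA_weight (BA n m rhos s lam t))).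
Proof.
move=> Sp; set Z := rsum n (BA_weight _).
rewrite (@rsum_ext n _ (fun x => (p x * trlog m (rhos x) (rhos x)
  - p x * trlog m (rhos x) (rho_of n m rhos (BA n m rhos s lam t)))
  - lam * (s x * p x) - ln Z * p x)) => [|x Hx]; last by rewrite ln_BA_ratio // -/Z; lra.
by rewrite !rsumB !rsumZ Sp; lra.
Qed.

End BlahutArimoto.

Lemma chi_trlog n m rhos p : chi n m rhos p =
  - trlog m (rho_of n m rhos p) (rho_of n m rhos p)
  + rsum n (fun x => p x * trlog m (rhos x) (rhos x)).
Proof.
rewrite /chi /entropy (@rsum_ext n _ (fun x => -1 * (p x * trlog m (rhos x) (rhos x)))).
  by rewrite rsumZ; lra.
by move=> x _; lra.
Qed.

Theorem corollary2 (n m : nat) (Hn : (1 <= n)%coq_nat) (Hm : (1 <= m)%coq_nat)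
  (rhos : nat -> Mat) (Hrho : forall x, (x < n)%coq_nat -> density m (rhos x))
  (s : nat -> R) (Hs : forall x, (x < n)%coq_nat -> 0 <= s x)
  (lam : R) (Hlam : 0 <= lam) (t : nat) (p : nat -> R) (Hp : simplex n p) :
  chi n m rhos p - lam * rsum n (fun x => s x * p x)
    - f_lambda n m rhos s lam (BA n m rhos s lam (S t)) (BA n m rhos s lam t)
  <= rsum n (fun x => p x * ln (BA n m rhos s lam (S t) x / BA n m rhos s lam t x)).
Proof.
have [p_ge0 p_sum1] := Hp.
set q := BA n m rhos s lam t.
have klein : rsum n (fun x => p x * trlog m (rhos x) (rho_of n m rhos q))
             <= trlog m (rho_of n m rhos p) (rho_of n m rhos p).
  rewrite -trlog_rho_of; apply/RleP/trlog_rho_of_le => [x | x | | x |].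
  - exact/Hrho/ssrnat.ltP/ltn_ord.
  - exact/RleP/p_ge0/ssrnat.ltP/ltn_ord.
  - by rewrite -rsumE.
  - exact/RltP/BA_gt0/ssrnat.ltP/ltn_ord.
  - by rewrite -rsumE BA_sum1.
rewrite chi_trlog f_lambda_BA // sum_ln_BA_ratio // -/q; lra.
Qed.
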